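(* The sequence of functions $V^n$ converges uniformly on $[0,\infty)\times[0,\bar c]$ to $\bar V$.
   Context: Let $(W_t)_{t\ge0}$ be a standard Brownian motion and $X_t=x+\mu t+\sigma W_t$ with constants $\mu\in\mathbb R$, $\sigma>0$ and initial value $x\ge 0$; $(\mathcal F_t)_{t\ge0}$ is the completed filtration generated by $X$. Fix $q>0$, $\Lambda>0$, $\bar c>0$. For a set $S\subset[0,\bar c]$, $x\ge0$ and $c\in S$, $\Pi^S_{x,c}$ denotes the set of processes $C=(C_t)_{t\ge0}$ that are non-increasing, right-continuous, $(\mathcal F_t)$-adapted, take values in $S$, and satisfy $C_t\le c$ for all $t\ge 0$ (an immediate reduction at time $0$ is allowed). For such $C$, $X^C_t=X_t-\int_0^t C_s\,ds$, $\tau=\inf\{t\ge0: X^C_t<0\}$, $J(x;C)=\mathbb E\big[\int_0^{\tau}e^{-qs}(C_s+\Lambda)\,ds\big]$ and $V^S(x,c)=\sup_{C\in\Pi^S_{x,c}}J(x;C)$. Let $(\mathcal S^n)_{n\ge0}$ be finite sets with $\{0,\bar c\}=\mathcal S^0\subset\mathcal S^1\subset\cdots\subset[0,\bar c]$, each containing $0$ and $\bar c$, whose mesh size $\delta(\mathcal S^n)$ (maximal gap between consecutive elements) tends to $0$. For $(x,c)\in[0,\infty)\times[0,\bar c]$ let $\tilde c^n=\max\{c'\in\mathcal S^n: c'\le c\}$ and $V^n(x,c)=V^{\mathcal S^n}(x,\tilde c^n)$. Then $V^n(x,c)$ is non-decreasing in $n$ and bounded by $V^{[0,\bar c]}(x,c)$,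 and $\bar V(x,c):=\lim_{n\to\infty}V^n(x,c)$. *)

From HB Require Import structures.
From mathcomp Require Import all_boot all_order all_algebra.
From mathcomp Require Import all_classical all_reals all_analysis.
Set Implicit Arguments. Unset Strict Implicit. Unset Printing Implicit Defensive.
Import Order.TTheory GRing.Theory Num.Theory.
Import numFieldNormedType.Exports.
Local Open Scope classical_set_scope.
Local Open Scope ring_scope.

Definition incr {R : realType} {Omega : Type} (W : R -> Omega -> R) (s t : R) :
  Omega -> R := fun w => W t w - W s w.

Definition is_std_BM {R : realType} {d : measure_display} {Omega : measurableType d}
  (P : probability Omega R) (W : R -> Omega -> R) : Prop :=
  [/\ (forall t, 0 <= t -> measurable_fun setT (W t)),
      (forall w, W 0 w = 0),
      (forall w, {within `[0, +oo[, continuous (fun t => W t w)}),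
      (forall s t (B : set R), 0 <= s -> s < t -> measurable B ->
         P (incr W s t @^-1` B) = normal_prob 0 (Num.sqrt (t - s)) B) &
      (forall (n : nat) (t : nat -> R) (B : nat -> set R),
         0 <= t 0%N -> (forall i, (i < n)%N -> t i <= t i.+1) ->
         (forall i, measurable (B i)) ->
         P (\bigcap_(i < n) (incr W (t i) (t i.+1) @^-1` B i)) =
         \big[*%E/1%E]_(i < n) P (incr W (t i) (t i.+1) @^-1` B i))].

Definition Xproc {R : realType} {Omega : Type} (W : R -> Omega -> R) (x mu sigma : R) :
  R -> Omega -> R := fun t w => x + mu * t + sigma * W t w.

Definition nat_sigma {R : realType} {Omega : Type} (X : R -> Omega -> R) (t : R) :
  set (set Omega) :=
  <<s [set A | exists s (B : set R), [/\ 0 <= s <= t, measurable B & A = X s @^-1` B]] >>.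

Definition completed_filtration {R : realType} {d : measure_display}
  {Omega : measurableType d} (P : probability Omega R) (X : R -> Omega -> R) (t : R) :
  set (set Omega) :=
  [set A | exists B N, [/\ nat_sigma X t B, measurable N, P N = 0%E &
                         (A `\` B) `|` (B `\` A) `<=` N]].

Definition admissible {R : realType} {d : measure_display} {Omega : measurableType d}
  (P : probability Omega R) (W : R -> Omega -> R) (x mu sigma : R)
  (S : set R) (c : R) (C : R -> Omega -> R) : Prop :=
  [/\ (forall w s t, 0 <= s -> s <= t -> C t w <= C s w),
      (forall w t, 0 <= t -> (fun u => C u w) @ t^'+ --> C t w),
      (forall t, 0 <= t -> forall B : set R, measurable B ->
          completed_filtration P (Xproc W x mu sigma) t (C t @^-1` B)) &
      (forall w t, 0 <= t -> S (C t w) /\ C t w <= c)].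

Definition XC {R : realType} {Omega : Type} (W : R -> Omega -> R) (x mu sigma : R)
  (C : R -> Omega -> R) : R -> Omega -> R :=
  fun t w => Xproc W x mu sigma t w
             - Rintegral (@lebesgue_measure R) [set u | 0 <= u <= t] (fun s => C s w).

Definition ruin_time {R : realType} {Omega : Type} (W : R -> Omega -> R) (x mu sigma : R)
  (C : R -> Omega -> R) (w : Omega) : \bar R :=
  ereal_inf [set t%:E | t in [set t | 0 <= t /\ XC W x mu sigma C t w < 0]].

Definition Jval {R : realType} {d : measure_display} {Omega : measurableType d}
  (P : probability Omega R) (W : R -> Omega -> R) (x mu sigma q Lam : R)
  (C : R -> Omega -> R) : \bar R :=
  (\int[P]_w
     (\int[@lebesgue_measure R]_(s in [set s : R | (0 <= s)%R /\ (s%:E < ruin_time W x mu sigma C w)%E])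
        ((expR (- (q * s)) * (C s w + Lam))%R%:E)))%E.

Definition Vval {R : realType} {d : measure_display} {Omega : measurableType d}
  (P : probability Omega R) (W : R -> Omega -> R) (mu sigma q Lam : R)
  (S : set R) (x c : R) : \bar R :=
  ereal_sup [set Jval P W x mu sigma q Lam C | C in admissible P W x mu sigma S c].

Definition mesh {R : realType} (S : set R) : R :=
  sup [set g | exists a b, [/\ S a, S b, a < b,
                 (forall y, S y -> ~ (a < y /\ y < b)) & g = b - a]].

Definition ctilde {R : realType} (S : set R) (c : R) : R :=
  sup [set c' | S c' /\ c' <= c].

Definition Vn {R : realType} {d : measure_display} {Omega : measurableType d}
  (P : probability Omega R) (W : R -> Omega -> R) (mu sigma q Lam : R)
  (Sn : nat -> set R) (n : nat) (x c : R) : \bar R :=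
  Vval P W mu sigma q Lam (Sn n) x (ctilde (Sn n) c).

Definition Vbar {R : realType} {d : measure_display} {Omega : measurableType d}
  (P : probability Omega R) (W : R -> Omega -> R) (mu sigma q Lam : R)
  (Sn : nat -> set R) (x c : R) : \bar R :=
  limn (fun n => Vn P W mu sigma q Lam Sn n x c).

From HB Require Import structures.
From mathcomp Require Import all_boot all_order all_algebra.
From mathcomp Require Import all_classical all_reals all_analysis.
From mathcomp Require Import lra ring measurable_realfun.
Import Order.TTheory GRing.Theory Num.Theory.
Import numFieldNormedType.Exports.
Local Open Scope classical_set_scope.
Local Open Scope ring_scope.

(* Rounding an admissible strategy C of the grid S^m down to the grid S^n,
   to the largest point ⌊C⌋ of S^n strictly below C, keeps it admissible, lowers
   the dividend rate by at most the mesh δ_n, and can only postpone ruin.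
   Since C + Λ <= (1 + δ_n/Λ) (⌊C⌋ + Λ), this gives V^m <= (1 + δ_n/Λ) V^n
   for every m, hence V^n <= V̄ <= (1 + δ_n/Λ) V^n.  All values are bounded
   by (c̄ + Λ)/q, so |V̄ - V^n| <= δ_n (c̄ + Λ)/(q Λ) uniformly in (x, c). *)

Section ge0_integral_nomeas.
Local Open Scope ereal_scope.
Context d (T : measurableType d) (R : realType) (mu : {measure set T -> \bar R}).
Import HBNNSimple.

(* The integral of a nonnegative function is the supremum of the integrals of
   the simple functions below it, so these comparisons need no measurability
   (the integrands of [Jval] involve the ruin time, whose measurability is
   not available). *)
Lemma ge0_le_integral_nomeas (D : set T) (f g : T -> \bar R) :
  (forall x, D x -> 0 <= f x) -> (forall x, D x -> f x <= g x) ->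
  \int[mu]_(x in D) f x <= \int[mu]_(x in D) g x.
Proof.
move=> f0 fg; rewrite (integral_mkcond D f) (integral_mkcond D g).
have f0' x : 0 <= (f \_ D) x by apply: erestrict_ge0.
have g0' x : 0 <= (g \_ D) x.
  by apply: erestrict_ge0 => y Dy; exact: le_trans (f0 y Dy) (fg y Dy).
rewrite !ge0_integralTE //; apply: ereal_sup_le => _ [h hf <-].
by exists h => //= x; exact: le_trans (hf x) (lee_restrict fg x).
Qed.

Lemma ge0_integralZl_le_nomeas (D : set T) (f : T -> \bar R) (k : R) : (0 < k)%R ->
  (forall x, D x -> 0 <= f x) ->
  \int[mu]_(x in D) (k%:E * f x) <= k%:E * \int[mu]_(x in D) f x.
Proof.
move=> k0 f0; rewrite (integral_mkcond D) (integral_mkcond D f) erestrict_scale.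
have f0' x : 0 <= (f \_ D) x by apply: erestrict_ge0.
rewrite !ge0_integralTE //; last by move=> x; rewrite mule_ge0// lee_fin ltW.
apply: ge_ereal_sup => _ [h hf <-].
have ki0 : (0 <= k^-1)%R by rewrite invr_ge0 ltW.
pose h' := scale_nnsfun h ki0.
have -> : sintegral mu h = k%:E * sintegral mu h'.
  rewrite /h' /scale_nnsfun sintegralrM muleA -EFinM divff ?gt_eqF// mul1e.
  by apply: eq_sintegral => x.
rewrite lee_pmul2l ?lte_fin //; apply: ereal_sup_ubound; exists h' => //= x.
rewrite /h' /= -(@lee_pmul2l _ k%:E) ?lte_fin// (le_trans _ (hf x))//.
by rewrite -EFinM mulrA divff ?gt_eqF// mul1r.
Qed.

Lemma ge0_subset_integral_nomeas (A B : set T) (f : T -> \bar R) : A `<=` B ->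
  (forall x, B x -> 0 <= f x) ->
  \int[mu]_(x in A) f x <= \int[mu]_(x in B) f x.
Proof.
move=> AB f0; rewrite (integral_mkcond A) (integral_mkcond B).
apply: ge0_le_integral_nomeas => x _.
  by apply: erestrict_ge0 => y /AB; exact: f0.
rewrite /patch; case: ifPn => xA; last by case: ifPn => // /set_mem/f0.
by rewrite ifT// inE; apply: AB; exact/set_mem.
Qed.

End ge0_integral_nomeas.
Arguments ge0_le_integral_nomeas {d T R mu D f g}.
Arguments ge0_integralZl_le_nomeas {d T R mu D f k}.
Arguments ge0_subset_integral_nomeas {d T R mu A B f}.

Lemma seq_has_max {disp : Order.disp_t} {T : orderType disp} {s : seq T} {x : T} :
  x \in s -> exists2 m, m \in s & forall y, y \in s -> (y <= m)%O.
Proof.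
elim: s x => // a [|b s] IH x _.
  by exists a; rewrite ?inE // => y; rewrite inE => /eqP->.
have [m ms mmax] := IH b (mem_head _ _).
have [am|ma] := leP a m.
  exists m; first by rewrite inE ms orbT.
  by move=> y; rewrite inE => /predU1P[->//|/mmax].
exists a; first exact: mem_head.
by move=> y; rewrite inE => /predU1P[->//|/mmax ym]; exact: le_trans ym (ltW ma).
Qed.

Section finite_set_sup.
Context {R : realType}.

Lemma finite_set_sup {A : set R} {x : R} : finite_set A -> A x ->
  A (sup A) /\ forall y, A y -> y <= sup A.
Proof.
move=> /finite_seqP[s ->] xs.
have [m ms mmax] := seq_has_max xs.
have -> : sup [set` s] = m.
  apply/eqP; rewrite eq_le; apply/andP; split.
    by apply: ge_sup; [exists m | move=> y /mmax].
  apply: sup_upper_bound => //; split; first by exists m.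
  by exists m => y /mmax.
by split => // y /mmax.
Qed.

Lemma finite_set_inf {A : set R} {x : R} : finite_set A -> A x ->
  A (inf A) /\ forall y, A y -> inf A <= y.
Proof.
move=> finA Ax.
have [[y Ay yE] ub] := finite_set_sup (finite_image -%R finA) (imageP -%R Ax).
rewrite /inf -yE opprK; split => // z Az.
by rewrite -lerN2 yE; apply: ub; exact: imageP.
Qed.

End finite_set_sup.

Definition grid_on {R : realType} (cbar : R) (S : set R) : Prop :=
  [/\ finite_set S, S 0, S cbar & S `<=` [set y | 0 <= y <= cbar]].

(* Strict inequality, so that [grid_floor S \o C] is right-continuous
   whenever C is non-increasing and right-continuous; 0 is the fallback. *)
Definition grid_floor {R : realType} (S : set R) (y : R) : R :=
  sup [set s | S s /\ (s < y \/ s = 0)].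

Section grid.
Context {R : realType} {cbar : R} {S : set R}.
Hypothesis gridS : grid_on cbar S.

Let grid_floor_spec y :
  [/\ S (grid_floor S y), grid_floor S y < y \/ grid_floor S y = 0 &
      forall s, S s -> s < y -> s <= grid_floor S y].
Proof.
have [finS S0 _ _] := gridS.
have fin : finite_set [set s | S s /\ (s < y \/ s = 0)].
  by apply: sub_finite_set finS => s [].
have [[Sg gy] ub] := finite_set_sup fin (conj S0 (or_intror erefl)).
by split => // s Ss sy; apply: ub; split => //; left.
Qed.

Lemma grid_floor_in y : S (grid_floor S y).
Proof. by case: (grid_floor_spec y). Qed.

Lemma grid_floor_ge0 y : 0 <= grid_floor S y.
Proof. by have [_ _ _ /(_ _ (grid_floor_in y))/andP[]] := gridS. Qed.

Lemma grid_floor_lt_or0 y : grid_floor S y < y \/ grid_floor S y = 0.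
Proof. by case: (grid_floor_spec y). Qed.

Lemma grid_floor_ge {s y} : S s -> s < y -> s <= grid_floor S y.
Proof. by case: (grid_floor_spec y) => _ _; apply. Qed.

Lemma grid_floor_le {y} : 0 <= y -> grid_floor S y <= y.
Proof. by move=> y0; case: (grid_floor_lt_or0 y) => [/ltW|->]. Qed.

Lemma grid_floor_homo : {homo grid_floor S : y y' / y <= y'}.
Proof.
move=> y y' yy'; case: (grid_floor_lt_or0 y) => [gy|->]; last exact: grid_floor_ge0.
by apply: grid_floor_ge; [exact: grid_floor_in | exact: lt_le_trans gy yy'].
Qed.

Lemma ctilde_spec {c} : 0 <= c ->
  [/\ S (ctilde S c), ctilde S c <= c & forall s, S s -> s <= c -> s <= ctilde S c].
Proof.
move=> c0; have [finS S0 _ _] := gridS.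
have fin : finite_set [set c' | S c' /\ c' <= c] by apply: sub_finite_set finS => s [].
by have [[Sct ctc] ub] := finite_set_sup fin (conj S0 c0); split => // s Ss sc; apply: ub.
Qed.

Lemma le_mesh a b : S a -> S b -> a < b ->
  (forall y, S y -> ~ (a < y /\ y < b)) -> b - a <= mesh S.
Proof.
move=> Sa Sb ab gap; have [_ _ _ Sle] := gridS.
apply: sup_upper_bound; last by exists a, b; split.
split; first by exists (b - a), a, b; split.
exists cbar => _ [a' [b' [Sa' Sb' _ _ ->]]].
have /andP[a'0 _] := Sle _ Sa'; have /andP[_ b'c] := Sle _ Sb'.
by rewrite lerBlDr (le_trans b'c)// lerDl.
Qed.

Let grid_floor_gap_pos y : 0 < y <= cbar -> y - grid_floor S y <= mesh S.
Proof.
move=> /andP[y0 ycb]; have [finS _ Scb _] := gridS.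
have gy : grid_floor S y < y by case: (grid_floor_lt_or0 y) => // ->.
have fin : finite_set [set s | S s /\ y <= s] by apply: sub_finite_set finS => s [].
have [[Sb yb] bmin] := finite_set_inf fin (conj Scb ycb).
apply: le_trans (_ : inf [set s | S s /\ y <= s] - grid_floor S y <= _).
  by rewrite lerD2r.
apply: le_mesh => //; [exact: grid_floor_in | exact: lt_le_trans yb |].
move=> s Ss [gs sb]; have [sy|ys] := ltP s y.
  by have := grid_floor_ge Ss sy; rewrite leNgt gs.
by have := bmin s (conj Ss ys); rewrite leNgt sb.
Qed.

Lemma mesh_ge0 : 0 < cbar -> 0 <= mesh S.
Proof.
move=> cb0; apply: le_trans (grid_floor_gap_pos cbar _); last by rewrite cb0 lexx.
by rewrite subr_ge0 grid_floor_le// ltW.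
Qed.

Lemma grid_floor_gap {y} : 0 < cbar -> 0 <= y <= cbar -> y - grid_floor S y <= mesh S.
Proof.
move=> cb0 /andP[y0 ycb]; have [y_gt0|] := ltP 0 y.
  by apply: grid_floor_gap_pos; rewrite y_gt0 ycb.
move=> y_le0; apply: le_trans (mesh_ge0 cb0).
by rewrite subr_le0 (le_trans y_le0)// grid_floor_ge0.
Qed.

End grid.

Section admissible.
Context {R : realType} {d : measure_display} {Omega : measurableType d}
  (P : probability Omega R) (W : R -> Omega -> R) (x mu sigma : R).

Lemma admissible_cst (S : set R) (c k : R) :
  S k -> k <= c -> admissible P W x mu sigma S c (fun _ _ => k).
Proof.
move=> Sk kc; split => //.
- by move=> w t _; exact: cvg_cst.
- move=> t _ B _.
  have [sigma0 sigmaC _] := smallest_sigma_algebra setT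
    [set A | exists s (B : set R),
      [/\ 0 <= s <= t, measurable B & A = Xproc W x mu sigma s @^-1` B]].
  have sigmaT := sigmaC _ sigma0; rewrite setD0 in sigmaT.
  have [kB|kB] := pselect (B k).
    exists setT, set0; split; [exact: sigmaT|exact: measurable0|exact: measure0|].
    by move=> w [[_ H]|[_ H]]; exfalso; apply: H.
  exists set0, set0; split; [exact: sigma0|exact: measurable0|exact: measure0|].
  by move=> w [[H _]|[]] //; exfalso; exact: kB H.
Qed.

Lemma admissible_grid_floor (cbar : R) (S S' : set R) (c' c : R) (C : R -> Omega -> R) :
  grid_on cbar S -> S' `<=` [set y | 0 <= y] -> c' <= c -> 0 <= c ->
  admissible P W x mu sigma S' c' C ->
  admissible P W x mu sigma S (ctilde S c) (fun t w => grid_floor S (C t w)).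
Proof.
move=> gridS S'ge0 c'c c0 [Cnonincr Crc Cadapted Cval]; split.
- by move=> w s t s0 st; apply: (grid_floor_homo gridS); exact: Cnonincr.
- move=> w t t0; apply: cvg_near_cst.
  have floor_ge_near : \forall u \near t^'+, grid_floor S (C t w) <= grid_floor S (C u w).
    have [gC|Cg] := ltP (grid_floor S (C t w)) (C t w).
      near=> u; apply: (grid_floor_ge gridS (grid_floor_in gridS (C t w))).
      by near: u; exact: (cvgr_gt _ (Crc w t t0) _ gC).
    have -> : grid_floor S (C t w) = 0.
      by case: (grid_floor_lt_or0 gridS (C t w)) => // gC; move: Cg; rewrite leNgt gC.
    by near=> u; exact: grid_floor_ge0 gridS _.
  near=> u.
  have tu : t <= u by apply: ltW; near: u; exact: nbhs_right_gt.
  apply/eqP; rewrite eq_le; apply/andP; split; last by near: u; exact: floor_ge_near.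
  exact: (grid_floor_homo gridS) (Cnonincr _ _ _ t0 tu).
- move=> t t0 B mB.
  have mg : measurable_fun setT (grid_floor S).
    by apply: nondecreasing_measurable => // a b ab; exact: grid_floor_homo gridS _ _ _.
  have := mg measurableT B mB; rewrite setTI => mgB.
  exact: Cadapted t t0 _ mgB.
- move=> w t t0; split; first exact: grid_floor_in gridS _.
  have [_ _ ctmax] := ctilde_spec gridS c0; apply: ctmax; first exact: grid_floor_in gridS _.
  have [/S'ge0 C0 Cc'] := Cval w t t0.
  exact: le_trans (grid_floor_le gridS C0) (le_trans Cc' c'c).
Unshelve. all: by end_near. Qed.

End admissible.

Lemma Rintegral_itv_le {R : realType} (t K : R) (f g : R -> R) :
  (forall s, 0 <= s <= t -> 0 <= f s <= g s) ->
  (forall s, 0 <= s <= t -> g s <= K) ->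
  Rintegral (@lebesgue_measure R) [set u | 0 <= u <= t] f <=
  Rintegral (@lebesgue_measure R) [set u | 0 <= u <= t] g.
Proof.
move=> fg gK; set D := [set u | 0 <= u <= t].
have DE : D = `[0, t]%classic by apply/seteqP; split => u; rewrite /= in_itv.
have mD : measurable D by rewrite DE.
have f0 s : D s -> (0 <= (f s)%:E)%E by move=> /fg /andP[]; rewrite lee_fin.
have g0 s : D s -> (0 <= (g s)%:E)%E.
  by move=> /fg /andP[f0' fg']; rewrite lee_fin (le_trans f0').
have fgE : (\int[lebesgue_measure]_(x in D) (f x)%:E <=
            \int[lebesgue_measure]_(x in D) (g x)%:E)%E.
  by apply: ge0_le_integral_nomeas => // s /fg/andP[_]; rewrite lee_fin.
have gfin : (\int[lebesgue_measure]_(x in D) (g x)%:E < +oo)%E.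
  apply: le_lt_trans (_ : (\int[lebesgue_measure]_(x in D) (cst K%:E x) < +oo)%E).
    by apply: ge0_le_integral_nomeas => // s /gK; rewrite lee_fin.
  rewrite integral_cst // DE; have := lebesgue_measure_itv `[0, t]; rewrite /= => ->.
  by case: ifP => _; rewrite ?mule0 ?ltry // -?EFinD -?EFinM ?ltry.
rewrite /Rintegral; apply: fine_le => //.
- by rewrite ge0_fin_numE; [exact: le_lt_trans fgE gfin|exact: integral_ge0].
- by rewrite ge0_fin_numE //; exact: integral_ge0.
Qed.

Section value_comparison.
Context {R : realType} {d : measure_display} {Omega : measurableType d}
  (P : probability Omega R) (W : R -> Omega -> R) (x mu sigma : R) {q Lam : R}.
Hypotheses (q0 : 0 < q) (Lam0 : 0 < Lam).

Let payoff_ge0 (C : R -> Omega -> R) w : (forall s, 0 <= s -> 0 <= C s w) ->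
  (0 <= \int[@lebesgue_measure R]_(s in [set s : R | (0 <= s)%R /\
      s%:E < ruin_time W x mu sigma C w]) (expR (- (q * s)) * (C s w + Lam))%R%:E)%E.
Proof.
move=> C0; apply: integral_ge0 => s [s0 _].
by rewrite lee_fin mulr_ge0 ?expR_ge0 // addr_ge0 ?C0 // ltW.
Qed.

Lemma ruin_time_le (C C' : R -> Omega -> R) (cbar : R) w :
  (forall s, 0 <= s -> 0 <= C' s w <= C s w /\ C s w <= cbar) ->
  (ruin_time W x mu sigma C w <= ruin_time W x mu sigma C' w)%E.
Proof.
move=> CC'; apply: ereal_inf_le_tmp => _ [t [t0 Ct] <-]; exists t => //; split => //.
apply: le_lt_trans Ct; rewrite /XC lerD2l lerN2.
by apply: (@Rintegral_itv_le _ t cbar) => s /andP[s0 _]; have [] := CC' s s0.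
Qed.

Lemma Jval_le_lower_rate (C C' : R -> Omega -> R) (cbar del : R) : 0 <= del ->
  (forall w s, 0 <= s ->
     [/\ 0 <= C' s w, C' s w <= C s w, C s w <= cbar & C s w <= C' s w + del]) ->
  (Jval P W x mu sigma q Lam C <=
   (1 + del / Lam)%:E * Jval P W x mu sigma q Lam C')%E.
Proof.
move=> del0 CC'; set k := 1 + del / Lam.
have k0 : 0 < k by rewrite ltr_pwDl // divr_ge0 // ltW.
have C0 w s : 0 <= s -> 0 <= C s w.
  by move=> s0; have [C'0 C'C _ _] := CC' w s s0; exact: le_trans C'0 C'C.
have C'0 w s : 0 <= s -> 0 <= C' s w by move=> s0; have [] := CC' w s s0.
rewrite /Jval; apply: le_trans (ge0_integralZl_le_nomeas k0 _); last first.
  by move=> w _; apply: payoff_ge0 => s; exact: C'0.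
apply: ge0_le_integral_nomeas => w _; first by apply: payoff_ge0 => s; exact: C0.
have ruin_later := @ruin_time_le C C' cbar w (fun s s0 =>
  let: And4 a b c _ := CC' w s s0 in conj (introT andP (conj a b)) c).
apply: le_trans (ge0_integralZl_le_nomeas k0 _); last first.
  by move=> s [s0 _]; rewrite lee_fin mulr_ge0 ?expR_ge0 // addr_ge0 ?C'0 // ltW.
apply: (@le_trans _ _ (\int[lebesgue_measure]_(s in
   [set s : R | (0 <= s)%R /\ s%:E < ruin_time W x mu sigma C w])
     (k%:E * (expR (- (q * s)) * (C' s w + Lam))%R%:E))%E).
  apply: ge0_le_integral_nomeas => s [s0 _].
    by rewrite lee_fin mulr_ge0 ?expR_ge0 // addr_ge0 ?C0 // ltW.
  rewrite -EFinM lee_fin mulrCA ler_pM2l ?expR_gt0 //.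
  have [_ _ _ CC'del] := CC' w s s0.
  have -> : k * (C' s w + Lam) = C' s w + Lam + del + del * C' s w / Lam.
    by rewrite /k; field; rewrite gt_eqF.
  have : 0 <= del * C' s w / Lam by rewrite divr_ge0 ?mulr_ge0 ?C'0 // ltW.
  lra.
apply: ge0_subset_integral_nomeas => [s [s0 sC]|s [s0 _]].
  by split => //; exact: lt_le_trans sC ruin_later.
by rewrite mule_ge0 // lee_fin ?(ltW k0) // mulr_ge0 ?expR_ge0 // addr_ge0 ?C'0 // ltW.
Qed.

Lemma Jval_bounded (C : R -> Omega -> R) (cbar : R) :
  (forall w s, 0 <= s -> 0 <= C s w <= cbar) ->
  (0 <= Jval P W x mu sigma q Lam C <= ((cbar + Lam) / q)%:E)%E.
Proof.
move=> Cbnd; set M := (cbar + Lam) / q.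
have C0 w s : 0 <= s -> 0 <= C s w by move=> s0; have /andP[] := Cbnd w s s0.
have cb0 : 0 <= cbar by have /andP[] := Cbnd point 0 (lexx 0); exact: le_trans.
have M0 : 0 < M by rewrite divr_gt0 // ltr_wpDl.
apply/andP; split; first by apply: integral_ge0 => w _; apply: payoff_ge0 => s; exact: C0.
(* e^{-qs} (C_s + Λ) <= M q e^{-qs}, and q e^{-qs} is the exponential density. *)
rewrite /Jval; apply: (@le_trans _ _ (\int[P]_(w in setT) (cst M%:E w))%E); last first.
  by rewrite integral_cst // [X in (_ * X <= _)%E]probability_setT mule1.
apply: ge0_le_integral_nomeas => w _; first by apply: payoff_ge0 => s; exact: C0.
apply: (@le_trans _ _ (\int[@lebesgue_measure R]_(s in setT)
   (M%:E * (exponential_pdf q s)%:E))%E); last first.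
  apply: le_trans (ge0_integralZl_le_nomeas M0 _) _.
    by move=> s _; rewrite lee_fin (exponential_pdf_ge0 (ltW q0)).
  by rewrite integral_exponential_pdf // mule1.
apply: le_trans (ge0_subset_integral_nomeas (subsetT _) _); last first.
  by move=> s _; rewrite -EFinM lee_fin mulr_ge0 ?(exponential_pdf_ge0 (ltW q0)) // ltW.
apply: ge0_le_integral_nomeas => s [s0 _].
  by rewrite lee_fin mulr_ge0 ?expR_ge0 // addr_ge0 ?C0 // ltW.
rewrite -EFinM lee_fin exponential_pdfE // mulrA divfK ?gt_eqF // mulNr mulrC.
by have /andP[_ Ccb] := Cbnd w s s0; rewrite ler_pM2r ?expR_gt0 // lerD2r.
Qed.

End value_comparison.

Section grid_values.
Context {R : realType} {d : measure_display} {Omega : measurableType d}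
  (P : probability Omega R) (W : R -> Omega -> R) (mu sigma q : R)
  {Lam cbar : R} {Sn : nat -> set R}.
Hypotheses (q0 : 0 < q) (Lam0 : 0 < Lam) (cbar0 : 0 < cbar)
  (gridSn : forall n, grid_on cbar (Sn n)) (Sn_nested : forall n, Sn n `<=` Sn n.+1).

Local Notation V n x c := (Vn P W mu sigma q Lam Sn n x c).

Let Sn_le n : Sn n `<=` [set y | 0 <= y <= cbar].
Proof. by case: (gridSn n). Qed.

Lemma Vn_bounded n x c : 0 <= c -> (0 <= V n x c <= ((cbar + Lam) / q)%:E)%E.
Proof.
move=> c0; have [ctS ctc _] := ctilde_spec (gridSn n) c0.
have J_bnd C := Jval_bounded P W x mu sigma q0 Lam0 C cbar.
apply/andP; split.
  apply: le_trans (_ : Jval P W x mu sigma q Lam (fun _ _ => ctilde (Sn n) c) <= _)%E.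
    by have /andP[] := J_bnd _ (fun w s _ => Sn_le _ _ ctS).
  apply: ereal_sup_ubound; exists (fun _ _ => ctilde (Sn n) c) => //.
  exact: admissible_cst.
apply: ge_ereal_sup => _ [C [_ _ _ Cval] <-].
by have /andP[] := J_bnd C (fun w s s0 => Sn_le _ _ (Cval w s s0).1).
Qed.

Lemma Vn_nondecreasing x c : 0 <= c ->
  {homo (fun n => V n x c) : n m / (n <= m)%N >-> (n <= m)%E}.
Proof.
move=> c0 n m nm; have Snm : Sn n `<=` Sn m.
  by apply: (homo_leq (@subset_refl _) _ Sn_nested nm) => A B C; exact: subset_trans.
apply: ereal_sup_le => _ [C [C1 C2 C3 Cval] <-].
exists C => //; split => // w t t0; have [SC Cc] := Cval w t t0; split.
  exact: Snm.
have [ctS ctc _] := ctilde_spec (gridSn n) c0; have [_ _ ctmax] := ctilde_spec (gridSn m) c0.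
exact: le_trans Cc (ctmax _ (Snm _ ctS) ctc).
Qed.

Lemma Vn_le_mesh n m x c : 0 <= c ->
  (V m x c <= (1 + mesh (Sn n) / Lam)%:E * V n x c)%E.
Proof.
move=> c0; apply: ge_ereal_sup => _ [C Cadm <-].
set Cn := fun s w => grid_floor (Sn n) (C s w).
have [_ ctc _] := ctilde_spec (gridSn m) c0.
have Cnadm : admissible P W x mu sigma (Sn n) (ctilde (Sn n) c) Cn.
  by apply: admissible_grid_floor (gridSn n) _ ctc c0 Cadm => y /Sn_le/andP[].
case: Cadm => _ _ _ Cval.
apply: le_trans (Jval_le_lower_rate P W x mu sigma (q := q) Lam0 C Cn cbar _
  (mesh_ge0 (gridSn n) cbar0) _) _.
  move=> w s s0; have [/Sn_le/andP[Cs0 Cscb] _] := Cval w s s0.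
  rewrite /Cn; split => //.
  - exact: grid_floor_ge0 (gridSn n) _.
  - by apply: (grid_floor_le (gridSn n)).
  - have := grid_floor_gap (gridSn n) cbar0 (y := C s w); rewrite Cs0 Cscb.
    by move=> /(_ isT); lra.
rewrite lee_pmul2l ?lte_fin ?ltr_pwDl ?divr_ge0 ?(mesh_ge0 (gridSn n)) ?(ltW Lam0) //.
by apply: ereal_sup_ubound; exists Cn.
Qed.

Lemma Vbar_supE x c : 0 <= c ->
  Vbar P W mu sigma q Lam Sn x c = ereal_sup (range (fun m => V m x c)).
Proof.
move=> c0; apply/cvg_lim => //; apply: ereal_nondecreasing_cvgn.
exact: Vn_nondecreasing.
Qed.

End grid_values.

Lemma abse_sub_le_rel {R : realType} {v w : \bar R} {M k e : R} : 0 <= k ->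
  (0 <= v <= M%:E)%E -> (v <= w <= (1 + k)%:E * v)%E -> k * M <= e ->
  (`|v - w| <= e%:E)%E.
Proof.
move=> k0; case: v w => [v| |] [w| |] //=; rewrite ?lee_fin ?leey ?andbF //.
move=> /andP[v0 vM] /andP[vw wv] kMe; rewrite ler_norml.
have : k * v <= k * M by rewrite ler_wpM2l.
lra.
Qed.

Theorem proposition5p1 (R : realType) (d : measure_display) (Omega : measurableType d)
  (P : probability Omega R) (W : R -> Omega -> R)
  (mu sigma q Lam cbar : R) (Sn : nat -> set R) :
  is_std_BM P W -> 0 < sigma -> 0 < q -> 0 < Lam -> 0 < cbar ->
  Sn 0%N = [set 0; cbar] ->
  (forall n, finite_set (Sn n)) ->
  (forall n, Sn n `<=` Sn n.+1) ->
  (forall n, Sn n `<=` [set y | 0 <= y <= cbar]) ->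
  (forall n, Sn n 0 /\ Sn n cbar) ->
  (fun n => mesh (Sn n)) @ \oo --> (0 : R) ->
  forall eps : R, 0 < eps -> exists N : nat, forall n : nat, (N <= n)%N ->
    forall x c : R, 0 <= x -> 0 <= c <= cbar ->
      (`| Vn P W mu sigma q Lam Sn n x c - Vbar P W mu sigma q Lam Sn x c | <= eps%:E)%E.
Proof.
move=> _ _ q0 Lam0 cbar0 _ finSn nested Sn_le Sn0cb mesh0 eps eps0.
have gridSn n : grid_on cbar (Sn n) by have [? ?] := Sn0cb n; split.
have M0 : 0 < (cbar + Lam) / q by rewrite divr_gt0 // ltr_wpDl // ltW.
have [N _ meshN] := cvgr_dist_le _ _ mesh0 _ (divr_gt0 (mulr_gt0 eps0 Lam0) M0).
exists N => n Nn x c _ /andP[c0 _].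
have mesh_ge0n := mesh_ge0 (gridSn n) cbar0.
have meshn : mesh (Sn n) / Lam * ((cbar + Lam) / q) <= eps.
  have := meshN n Nn; rewrite /= sub0r normrN ger0_norm //.
  by rewrite ler_pdivlMr // mulrAC ler_pdivrMr.
apply: (abse_sub_le_rel (divr_ge0 mesh_ge0n (ltW Lam0))
  (Vn_bounded P W mu sigma q q0 Lam0 gridSn n x c c0) _ meshn).
rewrite (Vbar_supE P W mu sigma q gridSn nested x c c0); apply/andP; split.
  by apply: ereal_sup_ubound; exists n.
apply: ge_ereal_sup => _ [m _ <-].
by have := Vn_le_mesh P W mu sigma q Lam0 cbar0 gridSn n m x c c0.
Qed.
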